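(* Let $\mathbf{k}$ be a commutative ring, $n\ge0$, $\mathcal{A}=\mathbf{k}[S_n]$. For every $\beta\in\operatorname{Comp}_n$, the subspace $\mathcal{R}_\beta$ is a $(\Sigma_n,\mathcal{A})$-subbimodule of $\mathcal{A}$; that is, $\mathcal{R}_\beta\mathcal{A}\subseteq\mathcal{R}_\beta$ and $\Sigma_n\mathcal{R}_\beta\subseteq\mathcal{R}_\beta$.
   Context: $S_n$ is the symmetric group on $[n]=\{1,\dots,n\}$, with product $(uw)(i)=u(w(i))$. For $w\in S_n$, $\operatorname{Des}(w)=\{i\in[n-1]: w(i)>w(i+1)\}$. For $I\subseteq[n-1]$, $\mathbf{B}_I=\sum_{w\in S_n,\ \operatorname{Des}(w)\subseteq I} w\in\mathcal{A}$. The descent algebra $\Sigma_n\subseteq\mathcal{A}$ is the $\mathbf{k}$-span of all $\mathbf{B}_I$ for $I\subseteq[n-1]$. A composition $\alpha=(\alpha_1,\dots,\alpha_p)$ of $n$ is a finite sequence of positive integers with sum $n$; $\operatorname{Comp}_n$ is the set of these. $\operatorname{Set}(\alpha)=\{\alpha_1,\alpha_1+\alpha_2,\dots,\alpha_1+\cdots+\alpha_{p-1}\}$, $\mathbf{B}_\alpha:=\mathbf{B}_{\operatorname{Set}(\alpha)}$, and $\mathcal{R}_\beta:=\mathbf{B}_\beta\mathcal{A}$. *)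

From HB Require Import structures.
From mathcomp Require Import all_boot all_order all_algebra all_fingroup.
Set Implicit Arguments. Unset Strict Implicit. Unset Printing Implicit Defensive.
Import GRing.Theory.
Local Open Scope ring_scope.

(* The group algebra k[S_n] is modelled as {ffun 'S_n -> k}: an element is
   the function w |-> coefficient of w.  NOTE: the canonical ring
   product on {ffun _ -> k} is pointwise; we do NOT use it.  The algebra
   product is the convolution [amul] below. *)
Definition galg (k : comPzRingType) (n : nat) := {ffun 'S_n -> k}.

(* The paper's product in S_n: (u w)(i) = u (w i), i.e. apply w first.
   In mathcomp, (s * t)%g x = t (s x), so the paper's u w is (w * u)%g. *)
Definition pprod (n : nat) (u w : 'S_n) : 'S_n := (w * u)%g.

Definition amul (k : comPzRingType) (n : nat) (f g : galg k n) : galg k n :=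
  [ffun w => \sum_(u : 'S_n) \sum_(v : 'S_n | pprod u v == w) f u * g v].

Definition ascale (k : comPzRingType) (n : nat) (c : k) (f : galg k n) : galg k n :=
  [ffun w => c * f w].

Definition aperm_el (k : comPzRingType) (n : nat) (w : 'S_n) : galg k n :=
  [ffun x => if x == w then 1 else 0].

(* Descents, in the paper's 1-based numbering: i \in Des(w) iff
   1 <= i <= n-1 and w(i) > w(i+1).  Positions/values of 'S_n are 0-based
   ('I_n = {0,...,n-1}), so paper position i is ordinal i-1. *)
Definition is_descent (n : nat) (w : 'S_n) (i : nat) : bool :=
  (0 < i < n)%N &&
  [exists j : 'I_n, exists j' : 'I_n,
     [&& val j == i.-1, val j' == i & (val (w j') < val (w j))%N]].

Definition Des_sub (n : nat) (w : 'S_n) (I : seq nat) : bool :=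
  [forall i : 'I_n, is_descent w (val i) ==> (val i \in I)].

Definition BI (k : comPzRingType) (n : nat) (I : seq nat) : galg k n :=
  \sum_(w : 'S_n | Des_sub w I) aperm_el k w.

Definition is_comp (n : nat) (a : seq nat) : bool :=
  all (fun x => 0 < x)%N a && (sumn a == n).

Definition SetC (a : seq nat) : seq nat :=
  [seq sumn (take j a) | j <- iota 1 (size a).-1].

Definition Balpha (k : comPzRingType) (n : nat) (a : seq nat) : galg k n :=
  BI k n (SetC a).

Definition in_Sigma (k : comPzRingType) (n : nat) (x : galg k n) : Prop :=
  exists s : seq (k * seq nat),
    all (fun p => all (fun i => 0 < i < n)%N p.2) s /\
    x = \sum_(p <- s) ascale p.1 (BI k n p.2).

Definition in_R (k : comPzRingType) (n : nat) (b : seq nat) (x : galg k n) : Prop :=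
  exists a : galg k n, x = amul (Balpha k n b) a.
Arguments in_R : clear implicits.

From mathcomp Require Import all_boot all_order all_algebra all_fingroup.
From mathcomp Require Import zify.
Set Implicit Arguments. Unset Strict Implicit. Unset Printing Implicit Defensive.

(* Cut the positions into consecutive blocks.  Every permutation factors
   uniquely as w o y with y preserving each block and w increasing on each
   block, and B_J is the sum of the w of the second kind for the blocks cut
   at J.  The coefficient of s in B_I B_J counts the factorisations of s
   through B_I and B_J; it depends only on the relative order of the values
   of s within each J-block, hence only on the block-preserving factor of s.
   So B_I B_J = B_J z, where z is B_I B_J restricted to the block-preserving
   permutations, and therefore Sigma_n B_J is contained in B_J A. *)

Section Blocks.
Local Open Scope group_scope.
Variable n : nat.
Implicit Types (b : nat -> nat) (s t w y : 'S_n) (a c x z : 'I_n).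

Definition block_sorted b w := [forall a : 'I_n, forall c : 'I_n,
  (a < c) && (b a == b c) ==> (w a < w c)].

Definition block_stable b y := [forall x : 'I_n, b (y x) == b x].

Lemma block_sortedP b w a c : block_sorted b w -> a < c -> b a = b c -> w a < w c.
Proof.
by move=> /forallP/(_ a)/forallP/(_ c)/implyP sw ac bac; apply: sw; rewrite ac bac eqxx.
Qed.

Lemma block_stableP b y x : block_stable b y -> b (y x) = b x.
Proof. by move=> /forallP/(_ x)/eqP. Qed.

Lemma block_sorted_ltE b w a c :
  block_sorted b w -> b a = b c -> (w a < w c) = (a < c).
Proof.
move=> sw bac; case: (ltngtP a c) => [ac|ca|/val_inj->]; last by rewrite ltnn.
- exact: block_sortedP ac bac.
- by apply/negbTE; rewrite -leqNgt ltnW // (block_sortedP sw ca).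
Qed.

Lemma block_stable1 b : block_stable b 1.
Proof. by apply/forallP => x; rewrite perm1. Qed.

Lemma block_stableV b y : block_stable b y -> block_stable b y^-1.
Proof.
by move=> sy; apply/forallP => x; rewrite -{2}(permKV y x) (block_stableP _ sy).
Qed.

Lemma block_stableM b y y' :
  block_stable b y -> block_stable b y' -> block_stable b (y * y').
Proof.
move=> sy sy'; apply/forallP => x.
by rewrite permM (block_stableP _ sy') (block_stableP _ sy).
Qed.

Lemma block_sorted_succP b w : {homo b : i j / i <= j} ->
  reflect (forall a c, c = a.+1 :> nat -> b a = b c -> w a < w c) (block_sorted b w).
Proof.
move=> hb; apply: (iffP idP) => [sw a c ca|w_succ].
  by apply: block_sortedP; rewrite // ca.
suff lt_to m a c : c = m :> nat -> a < c -> b a = b c -> w a < w c.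
  apply/forallP => a; apply/forallP => c; apply/implyP => /andP [ac /eqP].
  exact: lt_to.
elim: m a c => [|m IH] a c cm ac bac; first by rewrite cm in ac.
have mn : m < n by move: (ltn_ord c); rewrite cm; lia.
pose d := Ordinal mn.
have [da|] := eqVneq (a : nat) m.
  by apply: w_succ; rewrite // cm da.
move=> dNa; have ad : a < d by rewrite /= ltn_neqAle dNa -ltnS -cm.
have bad : b a = b d.
  by apply/eqP; rewrite eqn_leq hb ?(ltnW ad) //= bac hb //= cm.
apply: (@ltn_trans (w d)); first exact: IH.
by apply: w_succ; rewrite // -bad.
Qed.

Lemma lt_of_block_lt b x z : {homo b : i j / i <= j} -> b x < b z -> x < z.
Proof. by move=> hb; apply: contraTT; rewrite -!leqNgt => /hb. Qed.

Lemma block_stable_lt b t w x z : {homo b : i j / i <= j} ->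
  block_stable b t -> block_sorted b w -> x < z ->
  (b x = b z -> w (t x) < w (t z)) -> t x < t z.
Proof.
move=> hb st sw xz; case: (eqVneq (b x) (b z)) => [bxz|/negbTE bxz] wt.
  by rewrite -(block_sorted_ltE sw) ?wt // !(block_stableP _ st).
apply: (lt_of_block_lt hb); rewrite !(block_stableP _ st) ltn_neqAle bxz hb //.
exact: ltnW.
Qed.

Lemma perm_incr_eq1 (r : 'S_n) : (forall a c, a < c -> r a < r c) -> r = 1.
Proof.
have incr_ge (q : 'S_n) x : (forall a c, a < c -> q a < q c) -> x <= q x.
  move=> q_incr; suff ge m z : val z = m -> m <= q z by apply: ge.
  elim: m z => [//|m IH] z hz.
  have hm : m < n by move: (ltn_ord z); rewrite hz; lia.
  have := q_incr (Ordinal hm) z; rewrite hz ltnSn => /(_ isT).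
  by have := IH (Ordinal hm) erefl; lia.
move=> r_incr; have rV_incr a c : a < c -> r^-1 a < r^-1 c.
  move=> ac; rewrite ltnNge leq_eqVlt negb_or; apply/andP; split.
    by apply: contraTneq ac => /val_inj/perm_inj->; rewrite ltnn.
  by apply: contraTN ac => /r_incr; rewrite !permKV -leqNgt => /ltnW.
apply/permP => x; rewrite perm1; apply/val_inj/eqP; rewrite eqn_leq incr_ge //.
by have := incr_ge _ (r x) rV_incr; rewrite permK => ->.
Qed.

Lemma block_factor_uniq b y y' w w' : {homo b : i j / i <= j} ->
  block_stable b y -> block_stable b y' -> block_sorted b w -> block_sorted b w' ->
  y * w = y' * w' -> w = w'.
Proof.
move=> hb sy sy' sw sw' yw.
pose r := y'^-1 * y.
have w'E x : w' x = w (r x).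
  by rewrite -[in LHS](permKV y' x) -(permM y' w') -yw !permM.
have sr : block_stable b r by apply: block_stableM => //; apply: block_stableV.
suff r1 : r = 1 by apply/permP => x; rewrite w'E r1 perm1.
apply: perm_incr_eq1 => a c ac; apply: (block_stable_lt hb sr sw ac) => bac.
by rewrite -!w'E (block_sortedP sw' ac bac).
Qed.

Definition potential w := (\sum_(x : 'I_n) x * w x)%N.

Lemma potential_tperm_lt w a c :
  a < c -> w c < w a -> potential w < potential (tperm a c * w).
Proof.
move=> ac wca; have ca : c != a by apply: contraTneq ac => ->; rewrite ltnn.
rewrite /potential [X in X < _](bigD1 a) // [X in _ < X](bigD1 a) //=.
rewrite [X in _ + X < _](bigD1 c) ?ca // [X in _ < _ + X](bigD1 c) ?ca //=.
rewrite !permM tpermL tpermR.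
rewrite [X in _ < _ + (_ + X)](eq_bigr (fun x : 'I_n => x * w x)%N); last first.
  by move=> x /andP [xa xc]; rewrite permM tpermD // eq_sym.
set R := bigop.body _ _ _; clearbody R; move: ac wca.
move: (val a) (val c) (val (w a)) (val (w c)) => A C WA WC AC WCA.
(* the swap increases the potential by (C - A) * (WA - WC) *)
have : 0 < (C - A) * (WA - WC) by rewrite muln_gt0 !subn_gt0 AC WCA.
nia.
Qed.

(* A block inversion of [y^-1 * s] could be removed by a transposition inside
   the block, which increases the potential; so the maximiser sorts each block. *)
Definition stab_part b s := [arg max_(y > 1 | block_stable b y) potential (y^-1 * s)].

Definition sort_part b s := (stab_part b s)^-1 * s.

Lemma stab_sort_partE b s : stab_part b s * sort_part b s = s.
Proof. by rewrite mulKVg. Qed.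

Lemma stab_partP b s : block_stable b (stab_part b s).
Proof. by rewrite /stab_part; case: arg_maxnP => //; apply: block_stable1. Qed.

Lemma sort_partP b s : block_sorted b (sort_part b s).
Proof.
rewrite /sort_part /stab_part; case: arg_maxnP; first exact: block_stable1.
move=> y sy y_max; set w := y^-1 * s.
apply/forallP => a; apply/forallP => c; apply/implyP => /andP [ac /eqP bac].
rewrite ltnNge leq_eqVlt negb_or; apply/andP; split.
  by apply: contraTneq ac => /val_inj/perm_inj->; rewrite ltnn.
apply/negP => wca; have bt x : b (tperm a c x) = b x by case: tpermP => // ->.
have syt : block_stable b (y * tperm a c).
  by apply/forallP => x; rewrite permM bt (block_stableP _ sy).
have := y_max _ syt; rewrite invMg tpermV -mulgA -/w.
by rewrite /= leqNgt (potential_tperm_lt ac wca).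
Qed.

Lemma sort_part_id b y w : {homo b : i j / i <= j} ->
  block_stable b y -> block_sorted b w -> sort_part b (y * w) = w.
Proof.
move=> hb sy sw; apply: (block_factor_uniq hb (stab_partP b _) sy) => //.
  exact: sort_partP.
exact: stab_sort_partE.
Qed.

Section FactorCount.
Variables (bI bJ : nat -> nat).
Hypothesis bI_homo : {homo bI : i j / i <= j}.

Definition nfactor s :=
  #|[pred u : 'S_n | block_sorted bI u && block_sorted bJ (s * u^-1)]|.

Definition same_block_pattern s s' :=
  forall a c, bJ a = bJ c -> (s a < s c) = (s' a < s' c).

Variables (s s' : 'S_n).
Hypothesis ss' : same_block_pattern s s'.

Let tau := s^-1 * s'.
(* Multiplying by tau and re-sorting the bI-blocks maps the factorisations
   counted by [nfactor s] injectively to those counted by [nfactor s']. *)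
Let resort u := sort_part bI (u * tau).

Lemma resort_factor u : block_sorted bI u -> block_sorted bJ (s * u^-1) ->
  block_sorted bJ (s' * (resort u)^-1).
Proof.
move=> su sp; set t := stab_part bI (u * tau); set p := s * u^-1.
have st : block_stable bI t by apply: stab_partP.
have resortE x : resort u (t x) = tau (u x).
  by rewrite -permM stab_sort_partE permM.
have upE x : u (p x) = s x by rewrite permM permKV.
have pE x : (s' * (resort u)^-1) x = t (p x).
  apply: (@perm_inj _ (resort u)); rewrite permM permKV resortE upE.
  by rewrite permM permK.
apply/forallP => a; apply/forallP => c; apply/implyP => /andP [ac /eqP bac].
rewrite !pE; apply: (block_stable_lt bI_homo st (sort_partP bI (u * tau))).
  exact: block_sortedP sp ac bac.
move=> bIp; rewrite !resortE /tau !upE !permM !permK -(ss' bac).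
by rewrite -!upE (block_sorted_ltE su bIp) (block_sortedP sp ac bac).
Qed.

Lemma resortK u : block_sorted bI u -> sort_part bI (resort u * tau^-1) = u.
Proof.
move=> su; have st := stab_partP bI (u * tau).
rewrite /resort {2}/sort_part mulgA mulgK.
exact: sort_part_id bI_homo (block_stableV st) su.
Qed.

Lemma nfactor_le : nfactor s <= nfactor s'.
Proof.
rewrite /nfactor -(card_in_imset (f := resort)); last first.
  by move=> u v /andP [su _] /andP [sv _] uv; rewrite -(resortK su) uv resortK.
apply/subset_leq_card/subsetP => _ /imsetP [u /andP [su sp] ->].
by rewrite inE /= sort_partP resort_factor.
Qed.

End FactorCount.

Lemma nfactor_pattern_eq bI bJ s s' : {homo bI : i j / i <= j} ->
  same_block_pattern bJ s s' -> nfactor bI bJ s = nfactor bI bJ s'.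
Proof.
move=> hI ss'; apply/eqP; rewrite eqn_leq !nfactor_le // => a c bac.
by rewrite ss'.
Qed.

End Blocks.

(* [block_of I x] numbers the block of the 0-based position [x] when the
   positions are cut after each 1-based position in [I]. *)
Definition block_of (I : seq nat) (x : nat) := count (fun i => 0 < i <= x) I.

Lemma block_of_homo I : {homo block_of I : x y / x <= y}.
Proof. by move=> x y xy; apply: sub_count => i /andP [-> ix]; apply: leq_trans ix xy. Qed.

Lemma block_ofS I x : block_of I x.+1 = block_of I x + count_mem x.+1 I.
Proof.
rewrite /block_of; elim: I => //= i I ->.
rewrite [i <= x.+1]leq_eqVlt ltnS eq_sym.
case: eqVneq => [<-|_] /=; last by rewrite addnA.
by rewrite ltnn add0n addnCA.
Qed.

Lemma block_of_succ_eq I x : (block_of I x.+1 == block_of I x) = (x.+1 \notin I).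
Proof. by rewrite block_ofS -{2}[block_of I x]addn0 eqn_add2l; apply/eqP/count_memPn. Qed.

Section Descents.
Variable n : nat.
Implicit Types (w : 'S_n) (a c : 'I_n).

Lemma is_descent_succ w a c : c = a.+1 :> nat -> is_descent w c = (w c < w a).
Proof.
move=> ca; rewrite /is_descent ca ltn0Sn -ca ltn_ord /=.
apply/existsP/idP => [[j /existsP [j' /and3P [/eqP ja /eqP jc]]]|wca].
  have -> : j = a by apply/val_inj; rewrite /= ja ca.
  by have -> : j' = c by apply/val_inj; rewrite /= jc.
by exists a; apply/existsP; exists c; rewrite ca !eqxx.
Qed.

Lemma Des_subP w I :
  reflect (forall a c, c = a.+1 :> nat -> w c < w a -> (c : nat) \in I) (Des_sub w I).
Proof.
apply: (iffP forallP) => [Des a c ca wca | Des c /=].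
  by have := Des c; rewrite /= (is_descent_succ _ ca) wca.
apply/implyP; case: (posnP c) => [c0|c_gt0]; first by rewrite /is_descent c0.
have an : c.-1 < n by rewrite (leq_ltn_trans (leq_pred c)).
have ca : c = (Ordinal an).+1 :> nat by rewrite /= prednK.
by rewrite (is_descent_succ _ ca); apply: Des.
Qed.

Lemma Des_sub_block_sorted w I : Des_sub w I = block_sorted (block_of I) w.
Proof.
apply/Des_subP/(block_sorted_succP _ (block_of_homo I)) => Des a c ca.
  move=> bac; rewrite ltnNge leq_eqVlt negb_or val_eqE (inj_eq perm_inj) -val_eqE /= ca.
  rewrite gtn_eqF //=; apply/negP => /(Des _ _ ca); apply/negP.
  by rewrite ca -block_of_succ_eq -ca bac.
move=> wca; apply: contraTT wca => cNI; rewrite -leqNgt ltnW // Des //.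
by apply/eqP; rewrite eq_sym ca block_of_succ_eq -ca.
Qed.

End Descents.

Import GRing.Theory.
Local Open Scope ring_scope.

Section GroupAlgebra.
Variables (k : comPzRingType) (n : nat).
Implicit Types (f g h : galg k n) (s u : 'S_n).

Lemma amulE f g s : amul f g s = \sum_u f u * g (s * u^-1)%g.
Proof.
rewrite ffunE; apply: eq_bigr => u _.
rewrite (eq_bigl (pred1 (s * u^-1)%g)) ?big_pred1_eq // => v /=.
by rewrite /pprod (can2_eq (mulgK u) (mulgKV u)).
Qed.

Lemma amulA f g h : amul (amul f g) h = amul f (amul g h).
Proof.
apply/ffunP => s; rewrite !amulE.
under eq_bigr do rewrite amulE big_distrl /=.
rewrite exchange_big /=; apply: eq_bigr => u _.
rewrite amulE big_distrr /= (reindex_inj (mulIg u)) /=; apply: eq_bigr => v _.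
by rewrite mulrA mulgK invMg mulgA.
Qed.

Lemma amul0l f : amul 0 f = 0.
Proof. by apply/ffunP => s; rewrite amulE ffunE big1 // => u _; rewrite ffunE mul0r. Qed.

Lemma amul0r f : amul f 0 = 0.
Proof. by apply/ffunP => s; rewrite amulE ffunE big1 // => u _; rewrite ffunE mulr0. Qed.

Lemma amulDl f g h : amul (g + h) f = amul g f + amul h f.
Proof.
apply/ffunP => s; rewrite amulE [in RHS]ffunE !amulE -big_split.
by apply: eq_bigr => u _; rewrite ffunE mulrDl.
Qed.

Lemma amulDr f g h : amul f (g + h) = amul f g + amul f h.
Proof.
apply/ffunP => s; rewrite amulE [in RHS]ffunE !amulE -big_split.
by apply: eq_bigr => u _; rewrite ffunE mulrDr.
Qed.

Lemma amulZl c f g : amul (ascale c f) g = ascale c (amul f g).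
Proof.
apply/ffunP => s; rewrite amulE [in RHS]ffunE amulE big_distrr.
by apply: eq_bigr => u _; rewrite ffunE /= mulrA.
Qed.

Lemma amulZr c f g : amul f (ascale c g) = ascale c (amul f g).
Proof.
apply/ffunP => s; rewrite amulE [in RHS]ffunE amulE big_distrr.
by apply: eq_bigr => u _; rewrite ffunE mulrCA.
Qed.

Lemma amul_suml (I : Type) (r : seq I) (F : I -> galg k n) g :
  amul (\sum_(i <- r) F i) g = \sum_(i <- r) amul (F i) g.
Proof. by elim: r => [|i r IH]; rewrite ?big_nil ?amul0l // !big_cons amulDl IH. Qed.

Lemma amul_sumr (I : Type) (r : seq I) (F : I -> galg k n) g :
  amul g (\sum_(i <- r) F i) = \sum_(i <- r) amul g (F i).
Proof. by elim: r => [|i r IH]; rewrite ?big_nil ?amul0r // !big_cons amulDr IH. Qed.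

End GroupAlgebra.

Section DescentAlgebra.
Variables (k : comPzRingType) (n : nat).
Implicit Types (f : galg k n) (s u : 'S_n).

Lemma BIE I u : BI k n I u = (block_sorted (block_of I) u)%:R.
Proof.
rewrite -Des_sub_block_sorted /BI sum_ffunE; case: (boolP (Des_sub u I)) => Du.
  rewrite (bigD1 u) //= ffunE eqxx big1 ?addr0 // => w /andP [_ wNu].
  by rewrite ffunE eq_sym (negbTE wNu).
by rewrite big1 // => w Dw; rewrite ffunE; case: eqP => // uw; rewrite uw Dw in Du.
Qed.

Lemma amul_BI_BIE I J s :
  amul (BI k n I) (BI k n J) s = (nfactor (block_of I) (block_of J) s)%:R.
Proof.
rewrite amulE /nfactor -sum1_card natr_sum [RHS]big_mkcond /=.
by apply: eq_bigr => u _; rewrite !BIE -natrM mulnb inE; case: ifP.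
Qed.

Definition stab_restr b f : galg k n := [ffun y => if block_stable b y then f y else 0].

Lemma BI_amul_stab_restr J f :
  (forall y w, block_stable (block_of J) y -> block_sorted (block_of J) w ->
    f (y * w)%g = f y) ->
  amul (BI k n J) (stab_restr (block_of J) f) = f.
Proof.
set b := block_of J; have hb : {homo b : i j / (i <= j)%N} by apply: block_of_homo.
move=> f_inv; apply/ffunP => s; rewrite amulE (bigD1 (sort_part b s)) //= big1.
  rewrite addr0 BIE sort_partP mul1r ffunE.
  have -> : (s * (sort_part b s)^-1)%g = stab_part b s.
    by rewrite /sort_part invMg invgK mulKVg.
  rewrite stab_partP.
  by rewrite -[in RHS](stab_sort_partE b s) f_inv ?stab_partP ?sort_partP.
move=> u uNs; rewrite BIE ffunE -/b; case: ifP => [sy|_]; last by rewrite mulr0.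
case: (boolP (block_sorted _ _)) => [su|_]; last by rewrite mul0r.
by move: uNs; rewrite -{1}(mulgKV u s) sort_part_id ?eqxx.
Qed.

Lemma amul_BI_BI_restr I J :
  amul (BI k n I) (BI k n J) =
  amul (BI k n J) (stab_restr (block_of J) (amul (BI k n I) (BI k n J))).
Proof.
rewrite BI_amul_stab_restr // => y w sy sw; rewrite !amul_BI_BIE.
congr _%:R; apply: nfactor_pattern_eq (block_of_homo I) _ => a c bac.
by rewrite !permM (block_sorted_ltE sw) // !(block_stableP _ sy).
Qed.

Lemma Sigma_amul_BI J f : in_Sigma f -> exists z, amul f (BI k n J) = amul (BI k n J) z.
Proof.
move=> [l [_ ->]].
pose restr I := stab_restr (block_of J) (amul (BI k n I) (BI k n J)).
exists (\sum_(p <- l) ascale p.1 (restr p.2)).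
rewrite amul_suml amul_sumr; apply: eq_bigr => p _.
by rewrite amulZl amulZr -amul_BI_BI_restr.
Qed.

End DescentAlgebra.

Theorem proposition2p7 (k : comPzRingType) (n : nat) (b : seq nat) :
  is_comp n b ->
  (* R_beta is a k-submodule of A *)
  [/\ in_R k n b 0,
      (forall x y, in_R k n b x -> in_R k n b y -> in_R k n b (x + y)),
      (forall (c : k) x, in_R k n b x -> in_R k n b (ascale c x)),
  (* R_beta A \subseteq R_beta *)
      (forall x a, in_R k n b x -> in_R k n b (amul x a))
  (* Sigma_n R_beta \subseteq R_beta *)
    & (forall s x, in_Sigma s -> in_R k n b x -> in_R k n b (amul s x))].
Proof.
move=> _; split.
- by exists 0; rewrite amul0r.
- by move=> _ _ [x ->] [y ->]; exists (x + y); rewrite amulDr.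
- by move=> c _ [x ->]; exists (ascale c x); rewrite amulZr.
- by move=> _ a [x ->]; exists (amul x a); rewrite amulA.
- move=> s _ /(Sigma_amul_BI (SetC b)) [z sB] [x ->].
  by exists (amul z x); rewrite -amulA [amul s _]sB amulA.
Qed.
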